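(* Let $\sigma$ be any function from atoms to atoms. Then for every context $\Gamma$ and formula $A$, the sequent $\Gamma\vdash A$ is derivable if and only if $\mathrm{fr}(\Gamma)=\mathrm{fr}(A)$ and the sequent $\sigma\Gamma\vdash\sigma A$ is derivable.
   Context: Formulas are built from atoms ($p,q,\dots$) by a binary product: every formula is an atom or $A\bullet B$. A context is a finite (possibly empty) list of formulas; commas denote concatenation. The sequent calculus has exactly four rules (no weakening, contraction or exchange): ($\bullet L$) from $A,B,\Delta\vdash C$ infer $A\bullet B,\Delta\vdash C$ (the product must be leftmost); ($\bullet R$) from $\Gamma\vdash A$ and $\Delta\vdash B$ infer $\Gamma,\Delta\vdash A\bullet B$; ($id$) $A\vdash A$; ($cut$) from $\Theta\vdash A$ and $\Gamma,A,\Delta\vdash B$ infer $\Gamma,\Theta,\Delta\vdash B$; derivable means conclusion of a finite derivation tree with no undischarged premises. The frontier is the ordered list of atom occurrences: $\mathrm{fr}(p)=p$, $\mathrm{fr}(A\bullet B)=\mathrm{fr}(A),\mathrm{fr}(B)$, and the frontier of a context is the concatenation of the frontiers of its formulas. $\sigma A$, $\sigma\Gamma$ denote the result of replacing each atom $p$ by $\sigma(p)$. *)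

From Stdlib Require Import List.
Import ListNotations.
Set Implicit Arguments.

Inductive formula (atom : Type) : Type :=
| Atom : atom -> formula atom
| Prod : formula atom -> formula atom -> formula atom.
Arguments Atom {atom} _.
Arguments Prod {atom} _ _.

(* A context is a finite list of formulas; commas = concatenation (++). *)
Definition context (atom : Type) := list (formula atom).

Inductive derivable {atom : Type} : context atom -> formula atom -> Prop :=
| der_prodL : forall (A B C : formula atom) (Delta : context atom),
    derivable (A :: B :: Delta) C -> derivable (Prod A B :: Delta) C
| der_prodR : forall (Gamma Delta : context atom) (A B : formula atom),
    derivable Gamma A -> derivable Delta B -> derivable (Gamma ++ Delta) (Prod A B)
| der_id : forall A : formula atom, derivable [A] A
| der_cut : forall (Theta Gamma Delta : context atom) (A B : formula atom),
    derivable Theta A -> derivable (Gamma ++ A :: Delta) B ->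
    derivable (Gamma ++ Theta ++ Delta) B.

Fixpoint fr {atom : Type} (A : formula atom) : list atom :=
  match A with
  | Atom p => [p]
  | Prod A B => fr A ++ fr B
  end.

Definition fr_ctx {atom : Type} (Gamma : context atom) : list atom :=
  flat_map fr Gamma.

Fixpoint subst {atom : Type} (sigma : atom -> atom) (A : formula atom) : formula atom :=
  match A with
  | Atom p => Atom (sigma p)
  | Prod A B => Prod (subst sigma A) (subst sigma B)
  end.

Definition subst_ctx {atom : Type} (sigma : atom -> atom) (Gamma : context atom)
  : context atom := map (subst sigma) Gamma.

(* Cuts are admissible, so it suffices to consider cut-free derivations.
   In a cut-free derivation every rule is read off from the shape of its
   conclusion, and that shape is recovered from the substituted sequent
   together with the frontier equation: substitution preserves frontier
   lengths, which locates the split of the context in (•R), and two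
   formulas with the same image under σ and the same frontier are equal,
   which settles the axioms. *)

From Stdlib Require Import List.
Import ListNotations.
Set Implicit Arguments.

Section Sequents.
Context {atom : Type}.

Inductive cutfree : context atom -> formula atom -> Prop :=
| cutfree_prodL : forall (A B C : formula atom) (Delta : context atom),
    cutfree (A :: B :: Delta) C -> cutfree (Prod A B :: Delta) C
| cutfree_prodR : forall (Gamma Delta : context atom) (A B : formula atom),
    cutfree Gamma A -> cutfree Delta B -> cutfree (Gamma ++ Delta) (Prod A B)
| cutfree_id : forall A : formula atom, cutfree [A] A.

Lemma cutfree_derivable (Gamma : context atom) (A : formula atom) :
  cutfree Gamma A -> derivable Gamma A.
Proof. induction 1; now constructor. Qed.

(* Every case but the principal one, where the right premise ends with (•L)
   on the cut formula, is handled by permuting the cut upwards. *)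
Lemma cutfree_cut_commute (X : formula atom) (Theta : context atom) :
  cutfree Theta X ->
  (forall X1 X2 Delta B, X = Prod X1 X2 ->
     cutfree (X1 :: X2 :: Delta) B -> cutfree (Theta ++ Delta) B) ->
  forall Gamma Delta B,
    cutfree (Gamma ++ X :: Delta) B -> cutfree (Gamma ++ Theta ++ Delta) B.
Proof.
  intros HTheta Hprincipal Gamma Delta B HB.
  remember (Gamma ++ X :: Delta) as L eqn:EL.
  revert Gamma Delta EL.
  induction HB as [A1 A2 C D H IH | G D A1 A2 H1 IH1 H2 IH2 | A];
    intros Gamma Delta EL.
  - destruct Gamma as [|g Gamma]; inversion EL; subst.
    + exact (Hprincipal A1 A2 Delta C eq_refl H).
    + apply cutfree_prodL, (IH (A1 :: A2 :: Gamma)). reflexivity.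
  - apply app_eq_app in EL as [l [[-> E] | [-> E]]].
    + destruct l as [|x l]; simpl in E.
      * subst D. rewrite app_nil_r in *.
        now apply (cutfree_prodR H1 (IH2 [] Delta eq_refl)).
      * inversion E; subst.
        rewrite (app_assoc Theta), (app_assoc Gamma).
        exact (cutfree_prodR (IH1 Gamma l eq_refl) H2).
    + rewrite <- app_assoc. exact (cutfree_prodR H1 (IH2 l Delta E)).
  - destruct Gamma as [|g [|]]; inversion EL; subst.
    now rewrite app_nil_r.
Qed.

Lemma cutfree_cut (X : formula atom) (Theta : context atom) :
  cutfree Theta X -> forall Gamma Delta B,
    cutfree (Gamma ++ X :: Delta) B -> cutfree (Gamma ++ Theta ++ Delta) B.
Proof.
  revert Theta.
  induction X as [p | X1 IHX1 X2 IHX2]; intros Theta HTheta;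
    apply (cutfree_cut_commute HTheta); intros Y1 Y2 Delta B E; [discriminate|].
  (* Principal case: go up the left premise to the (•R) introducing X1 • X2,
     then cut X1 and X2 separately. *)
  injection E as <- <-.
  revert Delta B.
  remember (Prod X1 X2) as X eqn:EX.
  induction HTheta as [A1 A2 C D _ IH | G D A1 A2 H1 _ H2 _ | A];
    intros Delta B HB.
  - exact (cutfree_prodL (IH EX Delta B HB)).
  - injection EX as -> ->.
    rewrite <- app_assoc.
    exact (IHX2 D H2 G Delta B (IHX1 G H1 [] (X2 :: Delta) B HB)).
  - subst. now constructor.
Qed.

Lemma derivable_cutfree (Gamma : context atom) (A : formula atom) :
  derivable Gamma A -> cutfree Gamma A.
Proof.
  induction 1.
  - now constructor.
  - now constructor.
  - constructor.
  - eapply cutfree_cut; eassumption.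
Qed.

Lemma fr_ctx_app (Gamma Delta : context atom) :
  fr_ctx (Gamma ++ Delta) = fr_ctx Gamma ++ fr_ctx Delta.
Proof. apply flat_map_app. Qed.

Lemma derivable_fr (Gamma : context atom) (A : formula atom) :
  derivable Gamma A -> fr_ctx Gamma = fr A.
Proof.
  induction 1 as [A B C Delta _ IH | Gamma Delta A B _ IH1 _ IH2 | A
                 | Theta Gamma Delta A B _ IH1 _ IH2]; simpl.
  - rewrite <- IH. symmetry. apply app_assoc.
  - now rewrite fr_ctx_app, IH1, IH2.
  - apply app_nil_r.
  - rewrite fr_ctx_app in *. simpl in IH2. now rewrite fr_ctx_app, IH1.
Qed.

Variable sigma : atom -> atom.

Lemma derivable_subst (Gamma : context atom) (A : formula atom) :
  derivable Gamma A -> derivable (subst_ctx sigma Gamma) (subst sigma A).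
Proof.
  unfold subst_ctx.
  induction 1 as [| | | Theta Gamma Delta A B _ IH1 _ IH2]; simpl.
  - now constructor.
  - rewrite map_app. now constructor.
  - constructor.
  - rewrite !map_app in *. exact (der_cut _ _ IH1 IH2).
Qed.

Lemma fr_subst (A : formula atom) : fr (subst sigma A) = map sigma (fr A).
Proof. induction A; simpl; [reflexivity|]. rewrite map_app. congruence. Qed.

Lemma fr_ctx_subst (Gamma : context atom) :
  fr_ctx (subst_ctx sigma Gamma) = map sigma (fr_ctx Gamma).
Proof.
  induction Gamma as [|A Gamma IH]; [reflexivity|].
  simpl. now rewrite map_app, fr_subst, <- IH.
Qed.

Lemma length_fr_subst (A : formula atom) :
  length (fr (subst sigma A)) = length (fr A).
Proof. now rewrite fr_subst, length_map. Qed.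

Lemma length_fr_ctx_subst (Gamma : context atom) :
  length (fr_ctx (subst_ctx sigma Gamma)) = length (fr_ctx Gamma).
Proof. now rewrite fr_ctx_subst, length_map. Qed.

Lemma app_inj_length {T : Type} {l1 l2 m1 m2 : list T} :
  length l1 = length m1 -> l1 ++ l2 = m1 ++ m2 -> l1 = m1 /\ l2 = m2.
Proof.
  revert m1; induction l1 as [|x l1 IH]; intros [|y m1] Hlen E;
    try discriminate; [easy|].
  injection E as -> E. injection Hlen as Hlen.
  destruct (IH m1 Hlen E) as [-> ->]. easy.
Qed.

Lemma subst_inj_fr (A B : formula atom) :
  subst sigma A = subst sigma B -> fr A = fr B -> A = B.
Proof.
  revert B.
  induction A as [p | A1 IH1 A2 IH2]; intros [q | B1 B2] E F;
    try discriminate; simpl in *.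
  - now injection F as ->.
  - injection E as E1 E2.
    assert (Hlen : length (fr A1) = length (fr B1)).
    { now rewrite <- length_fr_subst, E1, length_fr_subst. }
    destruct (app_inj_length Hlen F).
    f_equal; auto.
Qed.

Lemma cutfree_subst_reflect (Gamma : context atom) (A : formula atom) :
  cutfree (subst_ctx sigma Gamma) (subst sigma A) -> fr_ctx Gamma = fr A ->
  cutfree Gamma A.
Proof.
  remember (subst_ctx sigma Gamma) as G' eqn:EG.
  remember (subst sigma A) as A' eqn:EA.
  intros H. revert Gamma A EG EA.
  induction H as [B1 B2 C D _ IH | G D B1 B2 H1 IH1 _ IH2 | B];
    intros Gamma A EG EA F.
  - destruct Gamma as [|[p | A1 A2] Gamma]; inversion EG; subst.
    apply cutfree_prodL, IH; try reflexivity.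
    rewrite <- F. apply app_assoc.
  - symmetry in EG. apply map_eq_app in EG as [Ga [Gb [-> [<- <-]]]].
    destruct A as [a | Aa Ab]; inversion EA; subst.
    rewrite fr_ctx_app in F.
    assert (Hlen : length (fr_ctx Ga) = length (fr Aa)).
    { rewrite <- length_fr_ctx_subst, <- length_fr_subst. f_equal.
      apply derivable_fr, cutfree_derivable, H1. }
    destruct (app_inj_length Hlen F).
    constructor; auto.
  - destruct Gamma as [|g [|]]; inversion EG; subst.
    assert (g = A) as ->.
    { apply subst_inj_fr; [congruence|]. rewrite <- F. symmetry. apply app_nil_r. }
    constructor.
Qed.

End Sequents.

Theorem proposition1p16 (atom : Type) (sigma : atom -> atom)
  (Gamma : context atom) (A : formula atom) :
  derivable Gamma A <->
  (fr_ctx Gamma = fr A /\ derivable (subst_ctx sigma Gamma) (subst sigma A)).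
Proof.
  split.
  - intros H. split; [apply derivable_fr | apply derivable_subst]; exact H.
  - intros [F H].
    apply cutfree_derivable, (cutfree_subst_reflect sigma); [|exact F].
    apply derivable_cutfree, H.
Qed.
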